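(* Let $n\ge3$. Then the map $\gamma\colon\mathbb{R}\to\mathcal{C}^1$ is injective (i.e. $\gamma$ is an embedded bi-infinite path).
   Context: Let $\mathbf{k}$ be a field of characteristic zero; $\mathrm{Tame}(\mathbf{k}^3)=\langle \mathrm{GL}_3(\mathbf{k})\ltimes\mathbf{k}^3,\ \{(x_1+P(x_2,x_3),x_2,x_3)\}\rangle$. For $r\in\{1,2,3\}$ a vertex of type $r$ is an orbit $[f_1,\dots,f_r]$, under post-composition by $\mathrm{GL}_r(\mathbf{k})\ltimes\mathbf{k}^r$, of the first $r$ components of an element $(f_1,f_2,f_3)\in\mathrm{Tame}(\mathbf{k}^3)$. $\mathcal{C}$ is the 2-dimensional simplicial complex on these vertices with triangles $[f_1],[f_1,f_2],[f_1,f_2,f_3]$ for $(f_1,f_2,f_3)\in\mathrm{Tame}(\mathbf{k}^3)$, with 1-skeleton $\mathcal{C}^1$; $\mathrm{Tame}(\mathbf{k}^3)$ acts by $g\cdot[f_1,\dots,f_r]=[f_1\circ g^{-1},\dots,f_r\circ g^{-1}]$. Let $g^{-1}=(x_2,x_1+x_2x_3,x_3)$, $h^{-1}=(x_3,x_1,x_2)$, $f=g^n\circ h$. Define $\gamma\colon\mathbb{R}\to\mathcal{C}^1$ by $\gamma(0)=[x_1]$, $\gamma(1)=[x_1,x_3]$, $\gamma(2)=[x_3]$, $\gamma[0,2]$ the length 2 path through them (parametrised by arc length), and $\gamma[2k,2k+2]=f^k\cdot\gamma[0,2]$ for $k\in\mathbb{Z}$. *)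

From Stdlib Require Import Reals ZArith.
From HB Require Import structures.
From mathcomp Require Import all_boot all_order all_algebra.
Set Implicit Arguments. Unset Strict Implicit. Unset Printing Implicit Defensive.
Import GRing.Theory.
Local Open Scope ring_scope.

Section Defs.
Variable k : fieldType.

(* k[x1,x2,x3] represented as k[x3][x2][x1]: outermost variable x1, innermost x3 *)
Definition P3 := {poly {poly {poly k}}}.
Definition x1 : P3 := 'X.
Definition x2 : P3 := ('X)%:P.
Definition x3 : P3 := ('X)%:P%:P.
Definition cst (c : k) : P3 := c%:P%:P%:P.

(* polynomial maps k^3 -> k^3, as triples of components (F1, F2, F3) *)
Definition map3 := (P3 * P3 * P3)%type.
Definition c1 (F : map3) : P3 := F.1.1.
Definition c2 (F : map3) : P3 := F.1.2.
Definition c3 (F : map3) : P3 := F.2.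
Definition mk3 (a b c : P3) : map3 := (a, b, c).

Definition sub3 (p : P3) (F : map3) : P3 :=
  \sum_(i < size p) (\sum_(j < size p`_i)
     (\sum_(l < size p`_i`_j) cst p`_i`_j`_l * (c3 F) ^+ l) * (c2 F) ^+ j)
     * (c1 F) ^+ i.

Definition comp3 (F G : map3) : map3 :=
  mk3 (sub3 (c1 F) G) (sub3 (c2 F) G) (sub3 (c3 F) G).
Definition id3 : map3 := mk3 x1 x2 x3.

Definition ginv : map3 := mk3 x2 (x1 + x2 * x3) x3.
Definition hinv : map3 := mk3 x3 x1 x2.

(* vertices: tuples (f1,...,fr) up to post-composition by GL_r(k) \ltimes k^r *)
Definition vert_eq (u v : seq P3) : Prop :=
  size u = size v /\
  exists (A : 'M[k]_(size u)) (b : 'I_(size u) -> k),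
    A \in unitmx /\
    forall i : 'I_(size u),
      nth 0 v i = \sum_(j < size u) cst (A i j) * nth 0 u j + cst (b i).

(* action of an automorphism F (given together with its inverse Finv) on vertices:
   F . [f1,..,fr] = [f1 \o F^{-1}, .., fr \o F^{-1}] *)
Definition act (Finv : map3) (v : seq P3) : seq P3 := [seq sub3 p Finv | p <- v].

Definition fmap (n : nat) (g h : map3) : map3 := comp3 (iter n (comp3 g) id3) h.
Definition finv (n : nat) : map3 := comp3 hinv (iter n (comp3 ginv) id3).

Definition fpowZ (n : nat) (g h : map3) (z : Z) : map3 :=
  if Z.leb Z0 z then iter (Z.to_nat z) (comp3 (fmap n g h)) id3
  else iter (Z.to_nat (Z.opp z)) (comp3 (finv n)) id3.

(* the vertex gamma(m), m integer:
   gamma(2k) = f^k . [x1],  gamma(2k+1) = f^k . [x1, x3] *)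
Definition gvert (n : nat) (g h : map3) (m : Z) : seq P3 :=
  let q := Z.div m (Zpos 2%positive) in
  act (fpowZ n g h (Z.opp q)) (if Z.even m then [:: x1] else [:: x1; x3]).

(* points of the geometric realisation of the graph C^1 (edges of length 1):
   a vertex, or the point (1-t) v + t w of the edge {v,w}, 0 < t < 1 *)
Inductive point :=
| PVert : seq P3 -> point
| PEdge : seq P3 -> seq P3 -> R -> point.

Definition point_eq (p q : point) : Prop :=
  match p, q with
  | PVert v, PVert w => vert_eq v w
  | PEdge v w t, PEdge v' w' t' =>
      (vert_eq v v' /\ vert_eq w w' /\ t = t') \/
      (vert_eq v w' /\ vert_eq w v' /\ t = Rminus R1 t')
  | _, _ => False
  end.

Definition gamma (n : nat) (g h : map3) (s : R) : point :=
  let m := Int_part s in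
  let t := Rminus s (IZR m) in
  if Req_EM_T t R0 then PVert (gvert n g h m)
  else PEdge (gvert n g h m) (gvert n g h (Z.succ m)) t.

End Defs.

(* Compose a map with the diagonal [(x1, x1, x1)] and record the [x1]-degrees
   (a, b, c) of its components.  Left composition with [g] sends them to
   (a + c, a, c) and with [g^-1] to (b, b + c, c), as long as the new product
   term dominates, while [h] and [h^-1] permute them.  Iterating, the first
   component of [f^j] (j > 0) and the third one of [f^-j] reach diagonal degree
   at least n >= 2, and so does the first one of [f^-j] for j > 1 (for j = 1 it
   is [x3]).  Hence no nonzero power of [f] sends [x1] to an affine function of
   [x1], nor [x1, x3] to affine functions of [x1, x3]: the vertices
   [f^q . [x1]] and [f^q . [x1, x3]] are pairwise distinct, and injectivity of
   [gamma] follows. *)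
From Pilot Require Import Defs.
From Stdlib Require Import Reals ZArith Lia Lra.
From HB Require Import structures.
From mathcomp Require Import all_boot all_order all_algebra zify.
(* Re-import so that [c1] denotes [Defs.c1] rather than Stdlib's [RiemannInt.c1]. *)
Import Defs.
Import GRing.Theory.
Local Open Scope ring_scope.

Set Implicit Arguments. Unset Strict Implicit. Unset Printing Implicit Defensive.

Lemma horner_morphE (R S : nzRingType) (f : R -> S) (u : S) (cfu : commr_rmorph f u)
    (p : {poly R}) :
  horner_morph cfu p = (map_poly f p).[u].
Proof. by []. Qed.

Lemma commr_rmorph_com (R : nzRingType) (S : comNzRingType) (f : R -> S) (u : S) :
  commr_rmorph f u.
Proof. by move=> x; rewrite /GRing.comm mulrC. Qed.

Section Substitution.
Variable k : fieldType.
Implicit Types (p q : P3 k) (F G H : map3 k).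

Definition cst_rmorph : {rmorphism k -> P3 k} :=
  ((@polyC _) \o (@polyC _)) \o (@polyC _).

Definition eval1 (c : P3 k) : {rmorphism {poly k} -> P3 k} :=
  horner_morph (commr_rmorph_com cst_rmorph c).
Definition eval2 (b c : P3 k) : {rmorphism {poly {poly k}} -> P3 k} :=
  horner_morph (commr_rmorph_com (eval1 c) b).
Definition eval3 F : {rmorphism P3 k -> P3 k} :=
  horner_morph (commr_rmorph_com (eval2 (c2 F) (c3 F)) (c1 F)).

Lemma eval1C c a : eval1 c a%:P = cst_rmorph a. Proof. exact: horner_morphC. Qed.
Lemma eval1X c : eval1 c 'X = c. Proof. exact: horner_morphX. Qed.
Lemma eval2C b c a : eval2 b c a%:P = eval1 c a. Proof. exact: horner_morphC. Qed.
Lemma eval2X b c : eval2 b c 'X = b. Proof. exact: horner_morphX. Qed.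
Lemma eval3C F a : eval3 F a%:P = eval2 (c2 F) (c3 F) a. Proof. exact: horner_morphC. Qed.
Lemma eval3X F : eval3 F 'X = c1 F. Proof. exact: horner_morphX. Qed.

Lemma sub3E p F : sub3 p F = eval3 F p.
Proof.
rewrite /sub3 /eval3 /= horner_morphE (horner_coef_wide _ (size_poly _ _)).
apply: eq_bigr => i _; rewrite coef_map /= horner_morphE; congr (_ * _).
rewrite (horner_coef_wide _ (size_poly _ _)).
apply: eq_bigr => j _; rewrite coef_map /= horner_morphE; congr (_ * _).
rewrite (horner_coef_wide _ (size_poly _ _)).
by apply: eq_bigr => l _; rewrite coef_map.
Qed.

Lemma sub3D p q F : sub3 (p + q) F = sub3 p F + sub3 q F.
Proof. by rewrite !sub3E rmorphD. Qed.

Lemma sub3M p q F : sub3 (p * q) F = sub3 p F * sub3 q F.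
Proof. by rewrite !sub3E rmorphM. Qed.

Lemma sub3B p q F : sub3 (p - q) F = sub3 p F - sub3 q F.
Proof. by rewrite !sub3E rmorphB. Qed.

Lemma sub3_cst c F : sub3 (cst c) F = cst c.
Proof. by rewrite sub3E eval3C eval2C eval1C. Qed.

Lemma sub3_x1 F : sub3 (x1 k) F = c1 F.
Proof. by rewrite sub3E eval3X. Qed.

Lemma sub3_x2 F : sub3 (x2 k) F = c2 F.
Proof. by rewrite sub3E eval3C eval2X. Qed.

Lemma sub3_x3 F : sub3 (x3 k) F = c3 F.
Proof. by rewrite sub3E eval3C eval2C eval1X. Qed.

Lemma poly_rmorph_eq (R S : nzRingType) (f f' : {rmorphism {poly R} -> S}) :
  (forall a, f a%:P = f' a%:P) -> f 'X = f' 'X -> f =1 f'.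
Proof.
move=> eqC eqX; elim/poly_ind => [|p a IHp]; first by rewrite !rmorph0.
by rewrite !rmorphD !rmorphM IHp eqX eqC.
Qed.

Lemma P3_rmorph_eq (S : nzRingType) (f f' : {rmorphism P3 k -> S}) :
  (forall c, f (cst c) = f' (cst c)) -> f (x1 k) = f' (x1 k) ->
  f (x2 k) = f' (x2 k) -> f (x3 k) = f' (x3 k) -> f =1 f'.
Proof.
move=> eqC eq1 eq2 eq3.
pose C1 : {rmorphism {poly {poly k}} -> P3 k} := polyC.
pose C2 : {rmorphism {poly k} -> {poly {poly k}}} := polyC.
have eqC2 : forall a, f (C1 (C2 a)) = f' (C1 (C2 a)).
  exact: (@poly_rmorph_eq _ _ ((f \o C1) \o C2) ((f' \o C1) \o C2) eqC eq3).
have eqC1 : forall a, f (C1 a) = f' (C1 a).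
  exact: (@poly_rmorph_eq _ _ (f \o C1) (f' \o C1) eqC2 eq2).
exact: poly_rmorph_eq eqC1 eq1.
Qed.

Lemma cst0_mul p : cst 0 * p = 0.
Proof. by rewrite /cst !polyC0 mul0r. Qed.

Lemma c1_comp3 F G : c1 (comp3 F G) = sub3 (c1 F) G. Proof. by []. Qed.
Lemma c3_comp3 F G : c3 (comp3 F G) = sub3 (c3 F) G. Proof. by []. Qed.

Lemma map3_eq F G : c1 F = c1 G -> c2 F = c2 G -> c3 F = c3 G -> F = G.
Proof.
by case: F => [[? ?] ?]; case: G => [[? ?] ?]; rewrite /c1 /c2 /c3 /= => -> -> ->.
Qed.

Lemma sub3_comp p G H : sub3 (sub3 p G) H = sub3 p (comp3 G H).
Proof.
rewrite !sub3E; apply: (@P3_rmorph_eq _ (eval3 H \o eval3 G)) => [c|||] /=;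
  by rewrite -!sub3E ?sub3_cst ?sub3_x1 ?sub3_x2 ?sub3_x3.
Qed.

Lemma comp3A F G H : comp3 (comp3 F G) H = comp3 F (comp3 G H).
Proof. by apply: map3_eq; rewrite /comp3 /mk3 /c1 /c2 /c3 /= sub3_comp. Qed.

Lemma comp3_id3r F : comp3 F (id3 k) = F.
Proof.
have sub3_id p : sub3 p (id3 k) = p.
  by rewrite sub3E; apply: (@P3_rmorph_eq _ _ idfun) => [c|||];
    rewrite -sub3E ?sub3_cst ?sub3_x1 ?sub3_x2 ?sub3_x3.
by apply: map3_eq; rewrite /comp3 /mk3 /c1 /c2 /c3 /= sub3_id.
Qed.

Lemma comp3_id3l F : comp3 (id3 k) F = F.
Proof.
by apply: map3_eq; rewrite /comp3 /mk3 /c1 /c2 /c3 /= ?sub3_x1 ?sub3_x2 ?sub3_x3.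
Qed.

End Substitution.

Section Powers.
Variable k : fieldType.
Implicit Types F G : map3 k.

Definition pow3 F m := iter m (comp3 F) (id3 k).

Lemma pow3S F m : pow3 F m.+1 = comp3 F (pow3 F m).
Proof. by []. Qed.

Lemma pow3Sr F m : pow3 F m.+1 = comp3 (pow3 F m) F.
Proof.
elim: m => [|m IHm]; first by rewrite /pow3 /= comp3_id3r comp3_id3l.
by rewrite [LHS]pow3S [in LHS]IHm -comp3A -pow3S.
Qed.

Lemma comp3_pow3 F m G : comp3 (pow3 F m) G = iter m (comp3 F) G.
Proof. by elim: m => [|m IHm]; rewrite ?comp3_id3l // pow3S comp3A IHm. Qed.

Lemma pow3_comp3_inv F Fi m : comp3 F Fi = id3 k -> comp3 (pow3 F m) (pow3 Fi m) = id3 k.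
Proof.
move=> FFi; elim: m => [|m IHm]; first by rewrite comp3_id3l.
by rewrite pow3S pow3Sr comp3A -(comp3A (pow3 F m)) IHm comp3_id3l FFi.
Qed.

Definition zpow3 F Fi (z : Z) :=
  if Z.leb 0 z then pow3 F (Z.to_nat z) else pow3 Fi (Z.to_nat (- z)).

Variables F Fi : map3 k.
Hypotheses (FFi : comp3 F Fi = id3 k) (FiF : comp3 Fi F = id3 k).
Local Notation zpow := (zpow3 F Fi).
Local Open Scope Z_scope.

Lemma zpow3_succ z : zpow (z + 1) = comp3 F (zpow z).
Proof.
rewrite /zpow3; case: (Z.leb_spec 0 z) => z_ge0.
  have /Z.leb_le -> : 0 <= z + 1 by lia.
  by rewrite Z2Nat.inj_add //= Nat.add_1_r.
case: (Z.leb_spec 0 (z + 1)) => z1_ge0.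
  have -> : z = -1 by lia.
  by rewrite /= comp3_id3r FFi.
have -> : Z.to_nat (- z) = (Z.to_nat (- (z + 1))).+1 by lia.
by rewrite pow3S -comp3A FFi comp3_id3l.
Qed.

Lemma zpow3_pred z : zpow (z - 1) = comp3 Fi (zpow z).
Proof.
by rewrite -[in RHS](Z.sub_add 1 z) zpow3_succ -comp3A FiF comp3_id3l.
Qed.

Lemma zpow3D a b : comp3 (zpow a) (zpow b) = zpow (a + b).
Proof.
elim/Z.peano_ind: a => [|a IHa|a IHa]; first exact: comp3_id3l.
- by rewrite -!Z.add_1_r zpow3_succ comp3A IHa -zpow3_succ; congr zpow; lia.
- by rewrite -!Z.sub_1_r zpow3_pred comp3A IHa -zpow3_pred; congr zpow; lia.
Qed.

End Powers.

Section Generators.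
Variable k : fieldType.
Implicit Types V : map3 k.

Definition gmap : map3 k := mk3 (x2 k - x1 k * x3 k) (x1 k) (x3 k).
Definition hmap : map3 k := mk3 (x2 k) (x3 k) (x1 k).

Lemma comp3_gmap V : comp3 gmap V = mk3 (c2 V - c1 V * c3 V) (c1 V) (c3 V).
Proof.
by rewrite /comp3 /gmap /mk3 /c1 /c2 /c3 /= sub3B sub3M !(sub3_x1, sub3_x2, sub3_x3).
Qed.

Lemma comp3_ginv V : comp3 (ginv k) V = mk3 (c2 V) (c1 V + c2 V * c3 V) (c3 V).
Proof.
by rewrite /comp3 /ginv /mk3 /c1 /c2 /c3 /= sub3D sub3M !(sub3_x1, sub3_x2, sub3_x3).
Qed.

Lemma comp3_hmap V : comp3 hmap V = mk3 (c2 V) (c3 V) (c1 V).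
Proof. by rewrite /comp3 /hmap /mk3 /c1 /c2 /c3 /= !(sub3_x1, sub3_x2, sub3_x3). Qed.

Lemma comp3_hinv V : comp3 (hinv k) V = mk3 (c3 V) (c1 V) (c2 V).
Proof. by rewrite /comp3 /hinv /mk3 /c1 /c2 /c3 /= !(sub3_x1, sub3_x2, sub3_x3). Qed.

Lemma left_inverse_eq F Fi G : comp3 F Fi = id3 k -> comp3 Fi G = id3 k -> F = G.
Proof. by move=> FFi FiG; rewrite -(comp3_id3r F) -FiG -comp3A FFi comp3_id3l. Qed.

Lemma ginv_gmap : comp3 (ginv k) gmap = id3 k.
Proof. by rewrite comp3_ginv /gmap /mk3 /c1 /c2 /c3 /= subrK. Qed.

Lemma hinv_hmap : comp3 (hinv k) hmap = id3 k.
Proof. by rewrite comp3_hinv. Qed.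

Lemma c1_finv n : c1 (finv k n) = x3 k.
Proof.
rewrite /finv c1_comp3 /hinv sub3_x3 -/(pow3 _ _).
by elim: n => [|n IHn] //; rewrite pow3S comp3_ginv.
Qed.

Lemma x3_neq_affine1 a b : x3 k <> cst a * x1 k + cst b.
Proof.
move/(congr1 (fun p => sub3 p (mk3 0 0 (x1 k)))).
rewrite sub3D sub3M !sub3_cst sub3_x1 sub3_x3 /c1 /c3 /= mulr0 add0r.
by move=> /(congr1 (fun p : P3 k => size p)); rewrite size_polyX size_polyC; case: (_ != 0).
Qed.

End Generators.

Section Degrees.
Variable k : fieldType.
Implicit Types V : map3 k.

(* Sizes are taken in the outermost variable [x1]; [a.+1] stands for degree [a]. *)
Definition sizes3 V (a b c : nat) :=
  [/\ size (c1 V) = a.+1, size (c2 V) = b.+1 & size (c3 V) = c.+1].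

Lemma size_mul_succ (p q : P3 k) a c :
  size p = a.+1 -> size q = c.+1 -> size (p * q) = (a + c)%N.+1.
Proof.
move=> sp sq; rewrite size_mul -?size_poly_eq0 ?sp ?sq //.
by rewrite addSn addnS.
Qed.

Lemma sizes3_gmap V a b c :
  sizes3 V a b c -> (b < a + c)%N -> sizes3 (comp3 (gmap k) V) (a + c)%N a c.
Proof.
case=> s1 s2 s3 ltb; rewrite comp3_gmap; split => //=.
by rewrite addrC size_polyDl size_polyN (size_mul_succ s1 s3) // s2 ltnS.
Qed.

Lemma sizes3_ginv V a b c :
  sizes3 V a b c -> (a < b + c)%N -> sizes3 (comp3 (ginv k) V) b (b + c)%N c.
Proof.
case=> s1 s2 s3 lta; rewrite comp3_ginv; split => //=.
by rewrite addrC size_polyDl (size_mul_succ s2 s3) // s1 ltnS.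
Qed.

Lemma sizes3_gmap_iter m V a b c : sizes3 V a b c -> (b < a + c)%N -> (0 < c)%N ->
  sizes3 (iter m.+1 (comp3 (gmap k)) V) (a + m.+1 * c)%N (a + m * c)%N c.
Proof.
move=> sV ltb c_gt0; elim: m => [|m IHm].
  by rewrite mul1n mul0n addn0; apply: sizes3_gmap sV _.
rewrite iterS (_ : (a + m.+2 * c = a + m.+1 * c + c)%N); last by lia.
by apply: sizes3_gmap IHm _; lia.
Qed.

Lemma sizes3_ginv_iter m V a b c : sizes3 V a b c -> (a < b + c)%N -> (0 < c)%N ->
  sizes3 (iter m.+1 (comp3 (ginv k)) V) (b + m * c)%N (b + m.+1 * c)%N c.
Proof.
move=> sV lta c_gt0; elim: m => [|m IHm].
  by rewrite mul1n mul0n addn0; apply: sizes3_ginv sV _.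
rewrite iterS (_ : (b + m.+2 * c = b + m.+1 * c + c)%N); last by lia.
by apply: sizes3_ginv IHm _; lia.
Qed.

Lemma sizes3_hmap V a b c : sizes3 V a b c -> sizes3 (comp3 (hmap k) V) b c a.
Proof. by case=> s1 s2 s3; rewrite comp3_hmap. Qed.

Lemma sizes3_hinv V a b c : sizes3 V a b c -> sizes3 (comp3 (hinv k) V) c a b.
Proof. by case=> s1 s2 s3; rewrite comp3_hinv. Qed.

Lemma sizes3_fmap m V a b c : sizes3 V a b c -> (0 < a)%N -> (c < a + b)%N ->
  sizes3 (comp3 (fmap m.+1 (gmap k) (hmap k)) V) (b + m.+1 * a)%N (b + m * a)%N a.
Proof.
move=> sV a_gt0 ltc; rewrite /fmap comp3A -/(pow3 _ _) comp3_pow3.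
by apply: sizes3_gmap_iter (sizes3_hmap sV) _ _ => //; lia.
Qed.

Lemma sizes3_finv m V a b c : sizes3 V a b c -> (0 < c)%N -> (a < b + c)%N ->
  sizes3 (comp3 (finv k m.+1) V) c (b + m * c)%N (b + m.+1 * c)%N.
Proof.
move=> sV c_gt0 lta; rewrite /finv comp3A -/(pow3 _ _) comp3_pow3.
by apply: sizes3_hinv; exact: (sizes3_ginv_iter m sV lta c_gt0).
Qed.

Definition diag3 : map3 k := mk3 (x1 k) (x1 k) (x1 k).

Lemma sizes3_diag3 : sizes3 diag3 1 1 1.
Proof. by split; rewrite /= size_polyX. Qed.

Definition affine13 (p : P3 k) :=
  exists a b c, p = cst a * x1 k + cst b * x3 k + cst c.

Lemma affine13_affine1 p a b : p = cst a * x1 k + cst b -> affine13 p.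
Proof. by move=> ->; exists a, 0, b; congr (_ + _); rewrite cst0_mul addr0. Qed.

Lemma size_diag3_affine13 p : affine13 p -> (size (sub3 p diag3) <= 2)%N.
Proof.
case=> a [b [c ->]].
rewrite !(sub3D, sub3M, sub3_cst, sub3_x1, sub3_x3) /= -mulrDl size_MXaddC.
case: ifP => // _; rewrite ltnS; apply: leq_trans (size_polyD _ _) _.
by rewrite geq_max !size_polyC_leq1.
Qed.

Lemma sizes3_fmap_pow m j : exists a b c,
  [/\ sizes3 (comp3 (pow3 (fmap m.+2 (gmap k) (hmap k)) j) diag3) a b c,
      (0 < a)%N, (c < a + b)%N & (0 < j -> m.+2 <= a)%N].
Proof.
elim: j => [|j [a [b [c [sV a_gt0 ltc _]]]]].
  by exists 1%N, 1%N, 1%N; rewrite comp3_id3l; split => //; exact: sizes3_diag3.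
exists (b + m.+2 * a)%N, (b + m.+1 * a)%N, a; split; try nia.
by rewrite pow3S comp3A; exact: sizes3_fmap sV a_gt0 ltc.
Qed.

Lemma sizes3_finv_pow m j : exists a b c,
  [/\ sizes3 (comp3 (pow3 (finv k m.+2) j) diag3) a b c,
      (0 < c)%N, (a < b + c)%N, (0 < j -> m.+2 <= c)%N & (1 < j -> m.+2 <= a)%N].
Proof.
elim: j => [|j [a [b [c [sV c_gt0 lta lec _]]]]].
  by exists 1%N, 1%N, 1%N; rewrite comp3_id3l; split => //; exact: sizes3_diag3.
exists c, (b + m.+1 * c)%N, (b + m.+2 * c)%N; split; try nia.
by rewrite pow3S comp3A; exact: sizes3_finv sV c_gt0 lta.
Qed.

Lemma fmap_pow_c1_not_affine13 m j :
  (0 < j)%N -> ~ affine13 (c1 (pow3 (fmap m.+2 (gmap k) (hmap k)) j)).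
Proof.
move=> j_gt0 /size_diag3_affine13.
have [a [b [c [[s1 _ _] _ _ le_a]]]] := sizes3_fmap_pow m j.
by rewrite -c1_comp3 s1; move: (le_a j_gt0); lia.
Qed.

Lemma finv_pow_c1_not_affine13 m j : (1 < j)%N -> ~ affine13 (c1 (pow3 (finv k m.+2) j)).
Proof.
move=> j_gt1 /size_diag3_affine13.
have [a [b [c [[s1 _ _] _ _ _ le_a]]]] := sizes3_finv_pow m j.
by rewrite -c1_comp3 s1; move: (le_a j_gt1); lia.
Qed.

Lemma finv_pow_c3_not_affine13 m j : (0 < j)%N -> ~ affine13 (c3 (pow3 (finv k m.+2) j)).
Proof.
move=> j_gt0 /size_diag3_affine13.
have [a [b [c [[_ _ s3] _ _ le_c _]]]] := sizes3_finv_pow m j.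
by rewrite -c3_comp3 s3; move: (le_c j_gt0); lia.
Qed.

End Degrees.

Lemma Z_div2_even_inj (a a' : Z) :
  Z.div a 2 = Z.div a' 2 -> Z.even a = Z.even a' -> a = a'.
Proof.
move=> eq_div eq_even; have := Zmod_even a; have := Zmod_even a'.
by rewrite eq_even; have := Z.div_mod a 2; have := Z.div_mod a' 2; lia.
Qed.

Section Trajectory.
Variables (k : fieldType) (m : nat) (g h : map3 k).
Hypotheses (hg1 : comp3 g (ginv k) = id3 k) (hg2 : comp3 (ginv k) g = id3 k)
  (hh1 : comp3 h (hinv k) = id3 k) (hh2 : comp3 (hinv k) h = id3 k).

Local Notation f := (fmap m.+2 g h).
Local Notation fi := (finv k m.+2).
Local Notation fpow := (fpowZ m.+2 g h).

Lemma g_gmap : g = gmap k. Proof. exact: left_inverse_eq hg1 (ginv_gmap k). Qed.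
Lemma h_hmap : h = hmap k. Proof. exact: left_inverse_eq hh1 (hinv_hmap k). Qed.

Lemma fmap_finv : comp3 f fi = id3 k.
Proof.
rewrite /fmap /finv comp3A -(comp3A h) hh1 comp3_id3l.
exact: (pow3_comp3_inv m.+2 hg1).
Qed.

Lemma finv_fmap : comp3 fi f = id3 k.
Proof.
rewrite /fmap /finv comp3A -(comp3A (iter _ _ _)) (pow3_comp3_inv m.+2 hg2).
by rewrite comp3_id3l hh2.
Qed.

Lemma fpowZD (a b : Z) : comp3 (fpow a) (fpow b) = fpow (a + b).
Proof. exact: zpow3D fmap_finv finv_fmap a b. Qed.

Lemma fpowZ_neq0 (z : Z) : z <> Z0 ->
  exists2 j, (0 < j)%N & fpow z = pow3 f j \/ fpow z = pow3 fi j.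
Proof.
move=> z_neq0; rewrite /fpowZ; case: (Z.leb_spec 0 z) => z_ge0.
  by exists (Z.to_nat z); [lia | left].
by exists (Z.to_nat (- z)); [lia | right].
Qed.

Lemma fpowZ_c1_affine1 z a b : c1 (fpow z) = cst a * x1 k + cst b -> z = Z0.
Proof.
move=> E; case: (Z.eq_dec z 0) => // /fpowZ_neq0 [j j_gt0].
rewrite g_gmap h_hmap in E * => -[] fz; rewrite fz in E.
  by case: (fmap_pow_c1_not_affine13 j_gt0 (affine13_affine1 E)).
case: (ltngtP j 1) => [|j_gt1|j1]; first by lia.
  by case: (finv_pow_c1_not_affine13 j_gt1 (affine13_affine1 E)).
by move: E; rewrite j1 /pow3 /= comp3_id3r c1_finv => /x3_neq_affine1.
Qed.

Lemma fpowZ_affine13 z : affine13 (c1 (fpow z)) -> affine13 (c3 (fpow z)) -> z = Z0.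
Proof.
move=> aff1 aff3; case: (Z.eq_dec z 0) => // /fpowZ_neq0 [j j_gt0].
rewrite g_gmap h_hmap in aff1 aff3 * => -[] fz; rewrite fz in aff1 aff3.
  by case: (fmap_pow_c1_not_affine13 j_gt0 aff1).
by case: (finv_pow_c3_not_affine13 j_gt0 aff3).
Qed.

Lemma sub3_c1c3_fpowZ_opp u : sub3 (c1 (fpow u)) (fpow (- u)) = x1 k /\
  sub3 (c3 (fpow u)) (fpow (- u)) = x3 k.
Proof. by rewrite -c1_comp3 -c3_comp3 fpowZD Z.add_opp_diag_r. Qed.

Lemma vert_eq_c1_fpowZ u v : vert_eq [:: c1 (fpow u)] [:: c1 (fpow v)] -> u = v.
Proof.
case=> _ [A [b [_ /(_ ord0)]]]; rewrite big_ord1 /= => E.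
have /fpowZ_c1_affine1 : c1 (fpow (v - u)) = cst (A ord0 ord0) * x1 k + cst (b ord0).
  rewrite -Z.add_opp_r -fpowZD c1_comp3 E sub3D sub3M !sub3_cst.
  by case: (sub3_c1c3_fpowZ_opp u) => ->.
lia.
Qed.

Lemma vert_eq_c1c3_fpowZ u v :
  vert_eq [:: c1 (fpow u); c3 (fpow u)] [:: c1 (fpow v); c3 (fpow v)] -> u = v.
Proof.
case=> _ [A [b [_ E]]].
have aff (p : P3 k) i : p = \sum_(j < 2) cst (A i j) * nth 0 [:: c1 (fpow u); c3 (fpow u)] j
    + cst (b i) -> affine13 (sub3 p (fpow (- u))).
  move=> ->; exists (A i ord0), (A i (lift ord0 ord0)), (b i).
  rewrite big_ord_recl big_ord1 !(sub3D, sub3M, sub3_cst) /=.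
  by case: (sub3_c1c3_fpowZ_opp u) => -> ->.
have aff1 : affine13 (c1 (fpow (v - u))).
  by rewrite -Z.add_opp_r -fpowZD c1_comp3; apply: aff (E ord0).
have aff3 : affine13 (c3 (fpow (v - u))).
  by rewrite -Z.add_opp_r -fpowZD c3_comp3; apply: aff (E (lift ord0 ord0)).
by have := fpowZ_affine13 aff1 aff3; lia.
Qed.

Lemma gvert_inj a a' : vert_eq (gvert m.+2 g h a) (gvert m.+2 g h a') -> a = a'.
Proof.
rewrite /gvert /act; have := @Z_div2_even_inj a a'.
case: (Z.even a) (Z.even a') => -[] /= div2_even_inj;
  rewrite ?sub3_x1 ?sub3_x3; try by case. (* different parities: lengths differ *)
- by move/vert_eq_c1_fpowZ => eq_div; apply: div2_even_inj; lia.
- by move/vert_eq_c1c3_fpowZ => eq_div; apply: div2_even_inj; lia.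
Qed.

End Trajectory.

Theorem corollary7p5 (k : fieldType) (char0 : [pchar k] =i pred0)
  (n : nat) (hn : (3 <= n)%N)
  (g h : map3 k)
  (hg1 : comp3 g (ginv k) = id3 k) (hg2 : comp3 (ginv k) g = id3 k)
  (hh1 : comp3 h (hinv k) = id3 k) (hh2 : comp3 (hinv k) h = id3 k) :
  forall s s' : R, point_eq (gamma n g h s) (gamma n g h s') -> s = s'.
Proof.
have [m ->] : exists m, n = m.+2 by exists n.-2; lia.
have gvert_inj := gvert_inj hg1 hg2 hh1 hh2.
move=> s s'; rewrite /gamma.
case: (Req_EM_T (s - IZR (Int_part s)) 0) => frac_s;
  case: (Req_EM_T (s' - IZR (Int_part s')) 0) => frac_s' //=.
- by move/gvert_inj => eq_int; rewrite eq_int in frac_s; lra.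
- case=> [[/gvert_inj eq_int [_ eq_frac]] | [/gvert_inj eq_int1 [/gvert_inj eq_int2 _]]].
    by rewrite eq_int in eq_frac; lra.
  by lia.
Qed.
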